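(* Let $\mathcal{A}$ be a pca and let $b\in\mathcal{A}$ satisfy $ba\simeq aa$ for all $a\in\mathcal{A}$. Then $b$ has a total extension in $\mathcal{A}$ if and only if every element of $\mathcal{A}$ has a total extension in $\mathcal{A}$.
   Context: A pca is a set $\mathcal{A}$ with partial binary application $ab$ (left associative, strict) containing $k,s$ with $kab=a$, $sab\downarrow$, $sabc\simeq ac(bc)$; $\simeq$ means both sides undefined or both defined and equal. An element $f$ is total if $fa$ is defined for all $a$; $f$ is a total extension of $b$ if $f$ is total and $ba\downarrow\Rightarrow fa=ba$ for all $a$. *)

(* A pca: carrier A with partial application modelled as
   app : A -> A -> option A (None = undefined). *)

Record pca := {
  carrier :> Type;
  app : carrier -> carrier -> option carrier;
  pk : carrier;
  ps : carrier
}.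

Definition papp {A : pca} (x y : option (carrier A)) : option (carrier A) :=
  match x, y with
  | Some a, Some b => app A a b
  | _, _ => None
  end.

(* Kleene equality on option: both undefined or both defined and equal,
   which for option is just Leibniz equality. *)
Definition kleq {T : Type} (x y : option T) : Prop := x = y.

Definition is_pca (A : pca) : Prop :=
  (forall a b : carrier A,
      papp (papp (Some (pk A)) (Some a)) (Some b) = Some a) /\
  (forall a b : carrier A,
      exists d, papp (papp (Some (ps A)) (Some a)) (Some b) = Some d) /\
  (forall a b c : carrier A,
      kleq (papp (papp (papp (Some (ps A)) (Some a)) (Some b)) (Some c))
           (papp (papp (Some a) (Some c)) (papp (Some b) (Some c)))).

Definition total {A : pca} (f : carrier A) : Prop :=
  forall a : carrier A, exists d, app A f a = Some d.

Definition total_extension {A : pca} (f b : carrier A) : Prop :=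
  total f /\ (forall a d : carrier A, app A b a = Some d -> app A f a = Some d).


(* Given a total extension f of b, extend c by h a := f (t_a), where t_a is the
   "frozen" application s (k c) (k a), so that t_a x = c a for every x.  Since
   b t_a = t_a t_a = c a whenever c a is defined, f t_a agrees with c a there;
   and h a is always defined because f is total.  The map a |-> t_a, and its
   composite with f, are represented in A by combinatory completeness. *)

Section PcaCombinators.

Variable A : pca.
Hypothesis HA : is_pca A.

Lemma app_k (a : carrier A) :
  exists ka, app A (pk A) a = Some ka /\ forall x, app A ka x = Some a.
Proof.
  destruct HA as [Hk _].
  pose proof (Hk a a) as Haa; simpl in Haa.
  destruct (app A (pk A) a) as [ka|] eqn:Eka; [|discriminate].
  exists ka; split; [reflexivity|].
  intro x; pose proof (Hk a x) as Hax; simpl in Hax.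
  rewrite Eka in Hax; exact Hax.
Qed.

Lemma app_s (a b : carrier A) :
  exists sa sab, app A (ps A) a = Some sa /\ app A sa b = Some sab /\
    forall c, app A sab c = papp (app A a c) (app A b c).
Proof.
  destruct HA as [_ [Hs_def Hs]].
  destruct (Hs_def a b) as [sab Esab]; simpl in Esab.
  destruct (app A (ps A) a) as [sa|] eqn:Esa; [|discriminate].
  exists sa, sab; split; [reflexivity|]; split; [exact Esab|].
  intro c; pose proof (Hs a b c) as Habc; unfold kleq in Habc; simpl in Habc.
  rewrite Esa, Esab in Habc; exact Habc.
Qed.

Lemma app_comp (f g : carrier A) :
  exists h, forall a, app A h a = papp (Some f) (app A g a).
Proof.
  destruct (app_k f) as [kf [_ Hkf]].
  destruct (app_s kf g) as [_ [h [_ [_ Hh]]]].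
  exists h; intro a; rewrite Hh, Hkf; reflexivity.
Qed.

Lemma app_delay (c : carrier A) :
  exists g, forall a, exists t, app A g a = Some t /\
    forall x, app A t x = app A c a.
Proof.
  (* g := s (s (k s) (k (k c))) k, so that g a = s (k c) (k a) =: t. *)
  destruct (app_k c) as [kc [_ Hkc]].
  destruct (app_k (ps A)) as [ks [_ Hks]].
  destruct (app_k kc) as [kkc [_ Hkkc]].
  destruct (app_s ks kkc) as [_ [g1 [_ [_ Hg1]]]].
  destruct (app_s g1 (pk A)) as [_ [g [_ [_ Hg]]]].
  exists g; intro a.
  destruct (app_k a) as [ka [Eka Hka]].
  destruct (app_s kc ka) as [skc [t [Eskc [Et Ht]]]].
  exists t; split.
  - rewrite Hg, Hg1, Hks, Hkkc; simpl.
    rewrite Eskc; simpl; rewrite Eka; exact Et.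
  - intro x; rewrite Ht, Hkc, Hka; reflexivity.
Qed.

Lemma total_extension_of_diagonal (b f : carrier A) :
  (forall a, app A b a = app A a a) -> @total_extension A f b ->
  forall c, exists h, @total_extension A h c.
Proof.
  intros Hb [Ftot Fext] c.
  destruct (app_delay c) as [g Hg].
  destruct (app_comp f g) as [h Hh].
  exists h; split.
  - intro a; destruct (Hg a) as [t [Et _]].
    rewrite Hh, Et; apply Ftot.
  - intros a d Hd; destruct (Hg a) as [t [Et Ht]].
    rewrite Hh, Et; apply Fext.
    rewrite Hb, Ht; exact Hd.
Qed.

End PcaCombinators.

Theorem mainTheorem14 (A : pca) (HA : is_pca A) (b : carrier A)
  (Hb : forall a : carrier A, kleq (app A b a) (app A a a)) :
  (exists f : carrier A, total_extension f b) <->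
  (forall c : carrier A, exists f : carrier A, total_extension f c).
Proof.
  split.
  - intros [f Hf]; exact (total_extension_of_diagonal A HA b f Hb Hf).
  - intro Hall; exact (Hall b).
Qed.
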